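(* Let $X$ be a finite simplicial complex, $d\ge0$, and $F:C_{d+1}(X)\to C_{d+1}(X)$ an arbitrary map. The system $\dot\theta=B_{d+1}F(B_{d+1}^\intercal\theta)$, seen as an ODE on $\operatorname{im}(B_{d+1})$, is conjugate to both systems on $\operatorname{im}(B_{d+1}^\intercal)$ $$\dot x=(B_{d+1}^\intercal B_{d+1})F(x)\quad\text{and}\quad\dot y=P_{d+1}F(B_{d+1}^\intercal B_{d+1}y).$$ Similarly, for an arbitrary map $H:C_{d-1}(X)\to C_{d-1}(X)$, the system $\dot\theta=B_d^\intercal H(B_d\theta)$, seen as an ODE on $\operatorname{im}(B_d^\intercal)$, is conjugate to both systems on $\operatorname{im}(B_d)$ $$\dot x=(B_dB_d^\intercal)H(x)\quad\text{and}\quad\dot y=Q_{d-1}H(B_dB_d^\intercal y).$$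
   Context: A finite simplicial complex $X$ on vertex set $\{1,\dots,n\}$ is a collection of nonempty subsets closed under taking nonempty subsets; $X_d$ is the set of simplices with $d+1$ vertices; a $d$-simplex with vertices $i_0<\dots<i_d$ is written $[i_0,\dots,i_d]$. $C_d(X)$ is the real vector space with basis $X_d$ and inner product making $X_d$ orthonormal ($C_{-1}(X)=0$). The boundary map is $\partial_d[i_0,\dots,i_d]=\sum_{k=0}^d(-1)^k[i_0,\dots,\widehat{i_k},\dots,i_d]$ with matrix $B_d$; $B_d^\intercal$ its transpose. $P_{d+1}$ is the orthogonal projection of $C_{d+1}(X)$ onto $\operatorname{im}(B_{d+1}^\intercal)$; $Q_{d-1}$ is the orthogonal projection of $C_{d-1}(X)$ onto $\operatorname{im}(B_d)$. ODEs $\dot u=A(u)$ on $U$ and $\dot v=C(v)$ on $V$ are conjugate if there is an invertible linear map $\Phi:U\to V$ with $\Phi\circ A=C\circ\Phi$. *)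

From HB Require Import structures.
From mathcomp Require Import all_boot all_order all_algebra.
From mathcomp Require Import reals.
Set Implicit Arguments. Unset Strict Implicit. Unset Printing Implicit Defensive.
Import Order.TTheory GRing.Theory Num.Theory.
Local Open Scope ring_scope.

(* A finite simplicial complex on the vertex set 'I_n = {0,..,n-1}
   (a relabelling of {1,..,n} preserving the order). *)
Definition simplicial_complex (n : nat) (X : {set {set 'I_n}}) : Prop :=
  set0 \notin X /\
  forall s t : {set 'I_n}, s \in X -> t \subset s -> t != set0 -> t \in X.

(* Simplices with exactly e vertices: Xv X (d+1) = X_d.  Since set0 \notin X,
   Xv X 0 is empty, which encodes C_{-1}(X) = 0. *)
Definition Xv (n : nat) (X : {set {set 'I_n}}) (e : nat) : {set {set 'I_n}} :=
  [set s in X | #|s| == e].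

(* Matrix of the boundary map B_d : C_d(X) -> C_{d-1}(X) in the bases
   X_d and X_{d-1} (rows indexed by X_{d-1} = Xv X d, columns by
   X_d = Xv X d.+1).  The coefficient of t in the boundary of s is
   (-1)^k when t = s minus its k-th smallest vertex v (k counted from 0),
   i.e. k = #{w in s | w < v}, and 0 otherwise. *)
Definition bnd (R : realType) (n : nat) (X : {set {set 'I_n}}) (d : nat)
  : 'M[R]_(#|Xv X d|, #|Xv X d.+1|) :=
  \matrix_(i < #|Xv X d|, j < #|Xv X d.+1|)
    let t : {set 'I_n} := @enum_val _ (mem (Xv X d)) i in
    let s : {set 'I_n} := @enum_val _ (mem (Xv X d.+1)) j in
    match [pick v in s :\: t] with
    | Some v => if t \subset s then (-1) ^+ #|[set w in s | (nat_of_ord w < nat_of_ord v)%N]| else 0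
    | None => 0
    end.

Definition colspace (R : realType) (m k : nat) (B : 'M[R]_(m, k)) (x : 'cV[R]_m)
  : Prop := exists y : 'cV[R]_k, x = B *m y.

Definition is_orth_proj (R : realType) (m : nat) (P : 'M[R]_m)
  (W : 'cV[R]_m -> Prop) : Prop :=
  (forall x, W (P *m x)) /\
  (forall x w : 'cV[R]_m, W w -> w^T *m (x - P *m x) = 0).

Definition conjugate (R : realType) (m k : nat)
  (U : 'cV[R]_m -> Prop) (V : 'cV[R]_k -> Prop)
  (A : 'cV[R]_m -> 'cV[R]_m) (C : 'cV[R]_k -> 'cV[R]_k) : Prop :=
  exists Phi : 'M[R]_(k, m),
    (forall u, U u -> V (Phi *m u)) /\
    (forall u1 u2, U u1 -> U u2 -> Phi *m u1 = Phi *m u2 -> u1 = u2) /\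
    (forall v, V v -> exists2 u, U u & Phi *m u = v) /\
    (forall u, U u -> Phi *m (A u) = C (Phi *m u)).

From HB Require Import structures.
From mathcomp Require Import all_boot all_order all_algebra.
From mathcomp Require Import reals.
Import Order.TTheory GRing.Theory Num.Theory.
Local Open Scope ring_scope.

Set Implicit Arguments. Unset Strict Implicit. Unset Printing Implicit Defensive.

(* Everything holds for an arbitrary real matrix B in place of the boundary
   matrix.  Since B^T B y = 0 forces |B y|^2 = 0, the Gram matrix G = B^T B has
   the kernel of B and the column space of B^T.  Hence B^T maps im B bijectively
   onto im B^T and intertwines th' = B F(B^T th) with x' = G F(x); and on im B^T
   the map x = G y is invertible, with inverse P Y for a generalized inverse Y
   of G, and intertwines x' = G F(x) with y' = P F(G y) because G P = G.  The
   statement about B_d is the same fact for the matrix B_d^T. *)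

Section GramMatrix.
Variable R : realFieldType.

Lemma trmx_mulmx_eq0 m n (N : 'M[R]_(m, n)) : N^T *m N = 0 -> N = 0.
Proof.
move=> N0; apply/matrixP=> i j; rewrite mxE.
have : (N^T *m N) j j = 0 by rewrite N0 mxE.
rewrite mxE => /psumr_eq0P sq0.
have /eqP := sq0 (fun l _ => ltac:(by rewrite mxE -expr2 sqr_ge0)) i isT.
by rewrite mxE mulf_eq0 orbb => /eqP.
Qed.

Lemma gram_mulmx_eq0 m k p (B : 'M[R]_(m, k)) (A : 'M[R]_(k, p)) :
  B^T *m B *m A = 0 -> B *m A = 0.
Proof.
move=> GA0; apply: trmx_mulmx_eq0.
by rewrite trmx_mul -mulmxA (mulmxA B^T) GA0 mulmx0.
Qed.

Lemma submx_gram m k (B : 'M[R]_(m, k)) : (B <= B^T *m B)%MS.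
Proof.
rewrite -(mxrank_leqif_sup (submxMl B^T B)).2 -[\rank B]mxrank_tr -(mxrank_mul_ker B^T B).
suff -> : (B^T :&: kermx B)%MS = 0 by rewrite mxrank0 addn0.
set C := (B^T :&: kermx B)%MS.
have CB0 : C *m B = 0 by apply/sub_kermxP; apply: capmxSr.
have /submxP[D defC] : (C <= B^T)%MS by apply: capmxSl.
rewrite defC in CB0 *; apply: trmx_inj; rewrite trmx_mul trmxK trmx0.
apply: gram_mulmx_eq0.
by rewrite -trmx0 -CB0 !trmx_mul trmxK mulmxA.
Qed.

End GramMatrix.

Section Conjugacy.
Variable R : realType.

Lemma colspace_gram m k (B : 'M[R]_(m, k)) (x : 'cV[R]_k) :
  colspace B^T x -> colspace (B^T *m B) x.
Proof.
move=> [z ->].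
have /submxP[D E] : (z^T *m B <= B^T *m B)%MS.
  exact: submx_trans (submxMl _ _) (submx_gram B).
by exists D^T; apply: trmx_inj; rewrite !trmx_mul !trmxK E.
Qed.

Lemma colspace_trmx_inj m k (B : 'M[R]_(m, k)) (u v : 'cV[R]_m) :
  colspace B u -> colspace B v -> B^T *m u = B^T *m v -> u = v.
Proof.
move=> [a ->] [b ->] Eab.
have /gram_mulmx_eq0/eqP : B^T *m B *m (a - b) = 0.
  by rewrite mulmxBr -!mulmxA Eab subrr.
by rewrite mulmxBr subr_eq0 => /eqP.
Qed.

Section OrthogonalProjection.
Variables (m k : nat) (B : 'M[R]_(m, k)) (P : 'M[R]_k).
Hypothesis HP : is_orth_proj P (colspace B^T).

Lemma orth_proj_mulmx (x : 'cV[R]_k) : B *m (P *m x) = B *m x.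
Proof.
(* Test the orthogonality of x - P x against B^T B (x - P x). *)
have [_ /(_ x (B^T *m (B *m (x - P *m x))))] := HP.
rewrite trmx_mul trmxK -mulmxA => /(_ (ex_intro _ _ erefl)) /trmx_mulmx_eq0.
by move/eqP; rewrite mulmxBr subr_eq0 => /eqP.
Qed.

Lemma orth_proj_id (v : 'cV[R]_k) : colspace B^T v -> P *m v = v.
Proof.
move=> Hv; have [HW _] := HP.
apply: (colspace_trmx_inj (HW v) Hv); rewrite trmxK.
exact: orth_proj_mulmx.
Qed.

Lemma orth_proj_ker (u : 'cV[R]_k) : B *m u = 0 -> P *m u = 0.
Proof.
move=> Bu0; have [HW _] := HP.
apply: (colspace_trmx_inj (HW u)); first by exists 0; rewrite mulmx0.
by rewrite trmxK orth_proj_mulmx Bu0 mulmx0.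
Qed.

End OrthogonalProjection.

Lemma conjugate_trans m k l (U : 'cV[R]_m -> Prop) (V : 'cV[R]_k -> Prop)
    (W : 'cV[R]_l -> Prop) A C D :
  conjugate U V A C -> conjugate V W C D -> conjugate U W A D.
Proof.
move=> [Phi [UV [injPhi [surjPhi PhiA]]]] [Psi [VW [injPsi [surjPsi PsiC]]]].
exists (Psi *m Phi); split; [|split; [|split]].
- by move=> u Uu; rewrite -mulmxA; apply/VW/UV.
- move=> u1 u2 Uu1 Uu2; rewrite -!mulmxA => /injPsi Phiu.
  by apply: injPhi => //; apply: Phiu; apply: UV.
- move=> w /surjPsi [v Vv <-]; have [u Uu <-] := surjPhi v Vv.
  by exists u; rewrite // mulmxA.
- by move=> u Uu; rewrite -!mulmxA PhiA // PsiC //; apply: UV.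
Qed.

Lemma conjugate_trmx m k (B : 'M[R]_(m, k)) (F : 'cV[R]_k -> 'cV[R]_k) :
  conjugate (colspace B) (colspace B^T)
    (fun th => B *m F (B^T *m th)) (fun x => (B^T *m B) *m F x).
Proof.
exists B^T; split; [|split; [|split]].
- by move=> _ [a ->]; exists (B *m a).
- by move=> u1 u2; apply: colspace_trmx_inj.
- move=> _ /colspace_gram [y ->].
  by exists (B *m y); [exists y | rewrite mulmxA].
- by move=> u _; rewrite mulmxA.
Qed.

Lemma conjugate_gram_orth_proj m k (B : 'M[R]_(m, k)) (P : 'M[R]_k)
    (F : 'cV[R]_k -> 'cV[R]_k) :
  is_orth_proj P (colspace B^T) ->
  conjugate (colspace B^T) (colspace B^T)
    (fun x => (B^T *m B) *m F x) (fun y => P *m F ((B^T *m B) *m y)).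
Proof.
move=> HP; set G := B^T *m B.
have [Y GYG] : exists Y, forall z : 'cV_k, G *m (Y *m (G *m z)) = G *m z.
  by exists (pinvmx G) => z; rewrite (mulmxA G) mulmxA mulmxKpV.
have GYx x : colspace B^T x -> G *m (Y *m x) = x.
  by move=> /colspace_gram [a ->]; rewrite -/G GYG.
have GP (z : 'cV_k) : G *m (P *m z) = G *m z.
  by rewrite /G -!mulmxA (orth_proj_mulmx HP).
have PYG (f : 'cV_k) : P *m (Y *m (G *m f)) = P *m f.
  apply/eqP; rewrite -subr_eq0 -mulmxBr; apply/eqP; apply: (orth_proj_ker HP).
  by apply: gram_mulmx_eq0; rewrite -/G mulmxBr GYG subrr.
have [HW _] := HP.
exists (P *m Y); split; [|split; [|split]].
- by move=> u _; rewrite -mulmxA; apply: HW.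
- move=> x1 x2 Hx1 Hx2; rewrite -!mulmxA => /(congr1 (mulmx G)).
  by rewrite !GP !GYx.
- move=> y Hy; exists (G *m y); first by exists (B *m y); rewrite mulmxA.
  by rewrite -mulmxA PYG (orth_proj_id HP).
- by move=> x Hx; rewrite -(mulmxA P) PYG -(mulmxA P) GP GYx.
Qed.

Lemma conjugate_trmx_orth_proj m k (B : 'M[R]_(m, k)) (P : 'M[R]_k)
    (F : 'cV[R]_k -> 'cV[R]_k) :
  is_orth_proj P (colspace B^T) ->
  conjugate (colspace B) (colspace B^T)
    (fun th => B *m F (B^T *m th)) (fun y => P *m F ((B^T *m B) *m y)).
Proof.
by move=> HP; apply: conjugate_trans (conjugate_trmx B F) (conjugate_gram_orth_proj F HP).
Qed.

End Conjugacy.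

Theorem mainTheorem10 (R : realType) (n : nat) (X : {set {set 'I_n}})
  (HX : simplicial_complex X) (d : nat) :
  (forall (F : 'cV[R]_#|Xv X d.+2| -> 'cV[R]_#|Xv X d.+2|)
          (P : 'M[R]_#|Xv X d.+2|),
     is_orth_proj P (colspace (bnd R X d.+1)^T) ->
     conjugate (colspace (bnd R X d.+1)) (colspace (bnd R X d.+1)^T)
       (fun th => bnd R X d.+1 *m F ((bnd R X d.+1)^T *m th))
       (fun x => ((bnd R X d.+1)^T *m bnd R X d.+1) *m F x)
     /\
     conjugate (colspace (bnd R X d.+1)) (colspace (bnd R X d.+1)^T)
       (fun th => bnd R X d.+1 *m F ((bnd R X d.+1)^T *m th))
       (fun y => P *m F (((bnd R X d.+1)^T *m bnd R X d.+1) *m y)))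
  /\
  (forall (H : 'cV[R]_#|Xv X d| -> 'cV[R]_#|Xv X d|)
          (Q : 'M[R]_#|Xv X d|),
     is_orth_proj Q (colspace (bnd R X d)) ->
     conjugate (colspace (bnd R X d)^T) (colspace (bnd R X d))
       (fun th => (bnd R X d)^T *m H (bnd R X d *m th))
       (fun x => (bnd R X d *m (bnd R X d)^T) *m H x)
     /\
     conjugate (colspace (bnd R X d)^T) (colspace (bnd R X d))
       (fun th => (bnd R X d)^T *m H (bnd R X d *m th))
       (fun y => Q *m H ((bnd R X d *m (bnd R X d)^T) *m y))).
Proof.
split=> [F P HP | H Q HQ].
  by split; [apply: conjugate_trmx | apply: conjugate_trmx_orth_proj].
have := conjugate_trmx (bnd R X d)^T H.
have := @conjugate_trmx_orth_proj _ _ _ (bnd R X d)^T Q H.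
rewrite !trmxK => conj_proj conj_gram.
by split; [exact: conj_gram | exact: conj_proj].
Qed.
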